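(* Let $R=\Bbbk[x_1,\ldots,x_n]$ be a standard graded polynomial ring over a field $\Bbbk$, and let $I$ be a monomial ideal of $R$ that has a componentwise linear resolution in all characteristics (i.e. the ideal generated by the same monomials has a componentwise linear resolution over every field). Then $\beta(I)$ does not depend on $\operatorname{char}\Bbbk$.
   Context: $\beta_{i,j}(I)=\dim_\Bbbk\operatorname{Tor}_i^R(\Bbbk,I)_j$ and $\beta(I)$ is the table of all $\beta_{i,j}(I)$; ''$\beta(I)$ does not depend on $\operatorname{char}\Bbbk$'' means that for all $i,j$, $\beta_{i,j}$ of the ideal generated by the same monomials in $\Bbbk[x_1,\ldots,x_n]$ is the same for every field $\Bbbk$. For $t\in\mathbb N$, $I_t$ is the vector space of degree-$t$ elements of $I$ and $(I_t)R$ the ideal it generates. The resolution of an ideal $I$ is $t$-linear if $I=(I_t)R$ and $\beta_{i,j}(I)=0$ for all $i$ and all $j\neq i+t$. $I$ has a componentwise linear resolution if for all $t\in\mathbb N$ the resolution of $(I_t)R$ is $t$-linear. *)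

(* Graded Betti numbers of monomial ideals, computed as
   Koszul homology: Tor_i^R(k, I)_j = H_i(x_1..x_n ; I)_j. *)
From HB Require Import structures.
From mathcomp Require Import all_boot all_order all_algebra.
Set Implicit Arguments. Unset Strict Implicit. Unset Printing Implicit Defensive.
Import GRing.Theory.

(* A monomial x^a of R = k[x_1..x_n] is its exponent vector a : 'I_n -> nat.
   A monomial ideal is represented by its (field-independent) set of monomials,
   given as a boolean predicate on exponent vectors. *)
Definition monpred (n : nat) := ('I_n -> nat) -> bool.

Definition monideal (n : nat) (G : seq {ffun 'I_n -> nat}) : monpred n :=
  fun a => has (fun g : {ffun 'I_n -> nat} => [forall k, g k <= a k]) G.

(* (I_t)R : the ideal generated by the degree-t monomials of I. *)
Definition deg_part (n : nat) (I : monpred n) (t : nat) : monpred n :=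
  fun a => [exists b : {ffun 'I_n -> 'I_t.+1},
             ((\sum_k (b k : nat)) == t) && I (fun k => (b k : nat))
             && [forall k, (b k : nat) <= a k]].

(* Koszul complex K(x) (x) I in degree j: basis elements e_F (x) x^m with
   F subset of the variables, |F| = i, x^m in I, |F| + deg m = j. *)
Definition kbasis_t (n j : nat) := ({set 'I_n} * {ffun 'I_n -> 'I_j.+1})%type.

Definition kbasis (n : nat) (I : monpred n) (j i : nat) (p : kbasis_t n j) : bool :=
  [&& #|p.1| == i, (\sum_k (p.2 k : nat)) + i == j & I (fun k => (p.2 k : nat))].

(* Matrix of the Koszul differential d_i : (K_i (x) I)_j -> (K_{i-1} (x) I)_j,
   d(e_F (x) x^m) = sum_{k in F} (-1)^{#{l in F, l < k}} e_{F\k} (x) x_k x^m,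
   written in the row-vector convention on the whole finite type kbasis_t
   (entries vanish outside the basis elements). *)
Definition kdiff (K : fieldType) (n : nat) (I : monpred n) (j i : nat)
  : 'M[K]_#|{: kbasis_t n j}| :=
  \matrix_(r < #|{: kbasis_t n j}|, c < #|{: kbasis_t n j}|)
    let p : kbasis_t n j := enum_val r in let q : kbasis_t n j := enum_val c in
    if @kbasis n I j i p && @kbasis n I j i.-1 q then
      match [pick k in p.1 | (q.1 == p.1 :\ k) &&
                [forall l, (q.2 l : nat) == p.2 l + (l == k)]] with
      | Some k => ((-1) ^+ #|[set l in p.1 | (l < k)%N]|)%R
      | None => 0%R
      end
    else 0%R.

(* beta_{i,j}(I) over K = dim H_i(K(x) (x) I)_j
   = dim C_i - rank d_i - rank d_{i+1}. *)
Definition betti (K : fieldType) (n : nat) (I : monpred n) (i j : nat) : nat :=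
  #|[set p | @kbasis n I j i p]| - \rank (@kdiff K n I j i) - \rank (@kdiff K n I j i.+1).

Definition t_linear (K : fieldType) (n : nat) (J : monpred n) (t : nat) : Prop :=
  (forall a, J a = deg_part J t a) /\
  (forall i j, j != i + t -> betti K J i j = 0).

Definition componentwise_linear (K : fieldType) (n : nat) (I : monpred n) : Prop :=
  forall t, t_linear K (deg_part I t) t.

(* beta_ij(I) is the dimension of the degree-j Koszul homology H_i(x; I), i.e.
   dim C_i - rank d_i - rank d_(i+1), and the dimensions dim C_i do not depend on the
   field. In internal degree j the generators of C_i carry monomials of degree j - i,
   so d_i is also the i-th Koszul differential of (I_(j-i))R. Since (I_(j-i))R has a
   (j-i)-linear resolution over every field, its degree-j Koszul complex is exact in
   all homological degrees below i; exactness then determines rank d_i recursively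
   from the (field-independent) dimensions of the chain spaces. *)

From mathcomp Require Import all_boot all_order all_algebra.
From mathcomp Require Import zify.
Set Implicit Arguments. Unset Strict Implicit. Unset Printing Implicit Defensive.
Import GRing.Theory.
Local Open Scope ring_scope.

Section SupportRank.
Variable F : fieldType.

Lemma mxrank_mul_eq0 m N p (A : 'M[F]_(m, N)) (B : 'M[F]_(N, p)) :
  A *m B = 0 -> (\rank A + \rank B <= N)%N.
Proof.
move=> AB0; have : (\rank A <= \rank (kermx B))%N.
  by apply: mxrankS; rewrite sub_kermx AB0.
by rewrite mxrank_ker; have := rank_leq_row B; lia.
Qed.

Variables (N : nat) (P : {pred 'I_N}).

Lemma mxrank_rowsub_support p (B : 'M[F]_(N, p)) :
  (forall r c, r \notin P -> B r c = 0) -> \rank (rowsub (enum_val (A := P)) B) = \rank B.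
Proof.
move=> B0; apply/eqP; rewrite eqn_leq mxrankS ?rowsub_sub //=.
apply/mxrankS/row_subP => r; have [Pr | nPr] := boolP (r \in P).
  by rewrite -(enum_rankK_in Pr Pr) -row_rowsub row_sub.
by rewrite (_ : row r B = 0) ?sub0mx //; apply/rowP => c; rewrite !mxE B0.
Qed.

Lemma mxrank_mul_support m p (A : 'M[F]_(m, N)) (B : 'M[F]_(N, p)) :
  (forall r c, c \notin P -> A r c = 0) -> (forall r c, r \notin P -> B r c = 0) ->
  A *m B = 0 -> (\rank A + \rank B <= #|P|)%N.
Proof.
move=> A0 B0 AB0; rewrite -(mxrank_rowsub_support B0) -mxrank_tr.
rewrite -(mxrank_rowsub_support (B := A^T)) => [|r c nPr]; last by rewrite mxE A0.
rewrite -[\rank (rowsub _ A^T)]mxrank_tr; apply: mxrank_mul_eq0.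
apply/matrixP => r c; rewrite !mxE.
transitivity ((A *m B) r c); last by rewrite AB0 mxE.
under eq_bigr do rewrite !mxE.
rewrite -(big_enum_val (A := P) (fun k => A r k * B k c)) mxE /=.
rewrite [RHS](bigID (mem P)) /= [X in _ = _ + X]big1 ?addr0 // => k nPk.
by rewrite A0 ?mul0r.
Qed.
End SupportRank.

Lemma sum_antisym (V : zmodType) n (F : 'I_n -> 'I_n -> V) :
  (forall a, F a a = 0) -> (forall a b, F a b = - F b a) -> \sum_a \sum_b F a b = 0.
Proof.
move=> F0 FN.
have split_lt a b : F a b = F a b *+ (a < b)%N + F a b *+ (b < a)%N.
  by case: ltngtP => [||/val_inj->]; rewrite ?mulr0n ?mulr1n ?addr0 ?add0r ?F0.
under eq_bigr do under eq_bigr do rewrite split_lt.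
under eq_bigr do rewrite big_split /=.
rewrite big_split /= [X in _ + X]exchange_big /= -big_split /= big1 // => a _.
by rewrite -big_split /= big1 // => b _; rewrite -mulrnDl [F b a]FN addrN mul0rn.
Qed.

Definition upclosed n (I : monpred n) :=
  forall a b : 'I_n -> nat, (forall k, (a k <= b k)%N) -> I a -> I b.

Lemma monideal_upclosed n (G : seq {ffun 'I_n -> nat}) : upclosed (monideal G).
Proof.
move=> a b ab /hasP[g gG /forallP ga]; apply/hasP; exists g => //.
by apply/forallP => k; apply: leq_trans (ga k) (ab k).
Qed.

Lemma deg_part_upclosed n (I : monpred n) t : upclosed (deg_part I t).
Proof.
move=> a b ab /existsP[c /andP[Ic /forallP ca]]; apply/existsP; exists c.
by rewrite Ic; apply/forallP => k; apply: leq_trans (ca k) (ab k).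
Qed.

Lemma deg_part_homog n (I : monpred n) t (a : 'I_n -> nat) :
  upclosed I -> (\sum_k a k = t)%N -> deg_part I t a = I a.
Proof.
move=> up sa; apply/idP/idP => [/existsP[c /andP[/andP[_ Ic] /forallP ca]] | Ia].
  exact: up Ic.
have le_t k : (a k <= t)%N by rewrite -sa (bigD1 k) //= leq_addr.
pose c : {ffun 'I_n -> 'I_t.+1} := [ffun k => inord (a k)].
have cE k : (c k : nat) = a k by rewrite ffunE inordK // ltnS.
apply/existsP; exists c; rewrite (eq_bigr _ (fun k _ => cE k)) sa eqxx /=.
have -> : I (fun k => (c k : nat)) by apply: up Ia => k; rewrite cE.
by apply/forallP => k; rewrite cE.
Qed.

Section KoszulCoefficients.
Variables (n j : nat).
Implicit Types (p q x : kbasis_t n j) (a b : 'I_n).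

Definition kstep p q a :=
  [&& a \in p.1, q.1 == p.1 :\ a & [forall l, (q.2 l : nat) == (p.2 l + (l == a))%N]].

Definition kstep2 p q a b :=
  [&& a \in p.1, b \in p.1 :\ a, q.1 == p.1 :\ a :\ b
    & [forall l, (q.2 l : nat) == (p.2 l + (l == a) + (l == b))%N]].

Lemma kstep_uniq p q a b : kstep p q a -> kstep p q b -> a = b.
Proof.
move=> /and3P[_ _ /forallP qa] /and3P[_ _ /forallP qb].
by move: (qa a) (qb a); rewrite eqxx => /eqP-> /eqP; case: eqP => //; lia.
Qed.

Lemma kstep_inj p x y a : kstep p x a -> kstep p y a -> x = y.
Proof.
case: x y => [x1 x2] [y1 y2] /and3P[_ /eqP /= x1E /forallP x2E].
case/and3P=> _ /eqP /= y1E /forallP y2E; congr pair; first by rewrite x1E y1E.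
by apply/ffunP => l; apply/val_inj; rewrite /= (eqP (x2E l)) (eqP (y2E l)).
Qed.

Lemma kstep2C p q a b : kstep2 p q a b = kstep2 p q b a.
Proof.
rewrite /kstep2 !in_setD1 setDDl setUC -setDDl.
have -> : [forall l, (q.2 l : nat) == (p.2 l + (l == a) + (l == b))%N] =
          [forall l, (q.2 l : nat) == (p.2 l + (l == b) + (l == a))%N].
  by apply: eq_forallb => l; rewrite addnAC.
by rewrite eq_sym; case: (a \in p.1); case: (b \in p.1); rewrite ?andbF.
Qed.

Lemma kstep_kstep2 p x q a b : kstep p x a -> kstep x q b -> kstep2 p q a b.
Proof.
move=> /and3P[ap /eqP x1 /forallP x2] /and3P[bx /eqP q1 /forallP q2].
rewrite /kstep2 ap -x1 bx q1 x1 eqxx /=.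
by apply/forallP => l; rewrite (eqP (q2 l)) (eqP (x2 l)).
Qed.

Variable K : fieldType.

(* The middle term of a two-step path is forced, and it exists: its monomial is
   bounded by that of the endpoint, so it fits in ['I_j.+1]. *)
Lemma sum_kstep2 p q a b :
  \sum_x ((kstep p x a && kstep x q b)%:R : K) = (kstep2 p q a b)%:R.
Proof.
have [st2|nst2] := boolP (kstep2 p q a b); last first.
  rewrite big1 // => x _; case: (boolP (_ && _)) => // /andP[pa xb].
  by rewrite (kstep_kstep2 pa xb) in nst2.
case/and4P: (st2) => ap bpa /eqP q1 /forallP q2.
have lt_j l : (p.2 l + (l == a) < j.+1)%N.
  by have := ltn_ord (q.2 l); rewrite (eqP (q2 l)); lia.
pose x0 : kbasis_t n j := (p.1 :\ a, [ffun l => Ordinal (lt_j l)]).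
have px0 : kstep p x0 a by rewrite /kstep ap eqxx; apply/forallP => l; rewrite ffunE.
have x0q : kstep x0 q b.
  by rewrite /kstep bpa q1 eqxx; apply/forallP => l; rewrite ffunE /= (eqP (q2 l)).
rewrite (bigD1 x0) //= px0 x0q big1 ?addr0 // => x xx0.
case: (boolP (kstep p x a)) => //= px.
by rewrite (kstep_inj px px0) eqxx in xx0.
Qed.

Definition ksign (S : {set 'I_n}) a : K := (-1) ^+ #|[set l in S | (l < a)%N]|.

Lemma ksign_swap_lt (S : {set 'I_n}) a b : a \in S -> (a < b)%N ->
  ksign S a * ksign (S :\ a) b = - (ksign S b * ksign (S :\ b) a).
Proof.
move=> aS ab; rewrite /ksign.
have -> : [set l in S :\ b | (l < a)%N] = [set l in S | (l < a)%N].
  apply/setP => l; rewrite !inE; case: (ltnP l a) => la; rewrite ?andbF //.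
  by rewrite (_ : l != b) //; apply/eqP => lb; move: la ab; rewrite lb; lia.
rewrite [in RHS](cardsD1 a) !inE aS ab /= exprD expr1.
have -> : [set l in S | (l < b)%N] :\ a = [set l in S :\ a | (l < b)%N].
  by apply/setP => l; rewrite !inE andbA.
by rewrite mulN1r mulNr opprK mulrC.
Qed.

Lemma ksign_swap (S : {set 'I_n}) a b : a \in S -> b \in S -> a != b ->
  ksign S a * ksign (S :\ a) b = - (ksign S b * ksign (S :\ b) a).
Proof.
move=> aS bS; rewrite neq_ltn => /orP[ab | ba]; first exact: ksign_swap_lt.
by rewrite (ksign_swap_lt bS ba) opprK.
Qed.

Definition kcoef p q : K := \sum_a (kstep p q a)%:R * ksign p.1 a.

Lemma kcoef_eq0 p q : (forall a, ~~ kstep p q a) -> kcoef p q = 0.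
Proof. by move=> nst; apply: big1 => a _; rewrite (negbTE (nst a)) mul0r. Qed.

Lemma kcoef_mul p x q : kcoef p x * kcoef x q =
  \sum_a \sum_b (kstep p x a && kstep x q b)%:R * (ksign p.1 a * ksign (p.1 :\ a) b).
Proof.
rewrite /kcoef mulr_suml; apply: eq_bigr => a _.
case: (boolP (kstep p x a)) => [/and3P[_ /eqP x1 _] | _]; last first.
  by rewrite /= mulr0n !mul0r big1 // => b _; rewrite mul0r.
rewrite /= mulr1n mul1r mulr_sumr; apply: eq_bigr => b _.
by rewrite x1 mulrCA.
Qed.

(* d^2 = 0 for the Koszul complex of the whole polynomial ring. *)
Lemma sum_kcoef_mul p q : \sum_x kcoef p x * kcoef x q = 0.
Proof.
under eq_bigr do rewrite kcoef_mul.
rewrite exchange_big /=; under eq_bigr do rewrite exchange_big /=.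
under eq_bigr do under eq_bigr do rewrite -mulr_suml sum_kstep2.
apply: sum_antisym => [a | a b]; first by rewrite /kstep2 setD11 andbF mul0r.
rewrite kstep2C; have [st2 | ] := boolP (kstep2 p q b a); last first.
  by rewrite /= mulr0n !mul0r oppr0.
case/and3P: st2 => bS; rewrite in_setD1 => /andP[ab aS] _.
by rewrite (ksign_swap aS bS ab) mulrN.
Qed.

End KoszulCoefficients.

Section KoszulDifferential.
Variables (K : fieldType) (n : nat) (I : monpred n) (j : nat).
Implicit Types (p q x : kbasis_t n j).

Lemma kdiffE i r c : kdiff K I j i r c =
  (kbasis I i (enum_val r) && kbasis I i.-1 (enum_val c))%:R *
    kcoef K (enum_val r) (enum_val c).
Proof.
rewrite mxE /=; case: (_ && _); last by rewrite mulr0n mul0r.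
rewrite mulr1n mul1r; case: (pickP (kstep (enum_val r) (enum_val c))) => [a pqa | nst].
  rewrite /kcoef (bigD1 a) //= pqa mul1r big1 ?addr0 // => b ba.
  case: (boolP (kstep _ _ b)) => [pqb | _]; last by rewrite mul0r.
  by rewrite (kstep_uniq pqb pqa) eqxx in ba.
by rewrite kcoef_eq0 // => a; rewrite nst.
Qed.

Lemma kbasis_gt i p : (j < i)%N -> kbasis I i p = false.
Proof. by move=> lt_ji; apply/and3P => -[_ /eqP deg _]; lia. Qed.

Lemma kdiff_gt i : (j < i)%N -> kdiff K I j i = 0.
Proof. by move=> lt_ji; apply/matrixP => r c; rewrite kdiffE kbasis_gt // mxE mul0r. Qed.

Lemma kdiff0 : kdiff K I j 0 = 0.
Proof.
apply/matrixP => r c; rewrite kdiffE mxE.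
case: (boolP (kbasis I 0 _)) => [/and3P[/eqP/cards0_eq p0 _ _] | _]; last by rewrite mul0r.
by rewrite kcoef_eq0 ?mulr0 // => a; rewrite /kstep p0 inE.
Qed.

Hypothesis up : upclosed I.

Lemma kbasis_kstep i p q a : kbasis I i p -> kstep p q a -> kbasis I i.-1 q.
Proof.
move=> /and3P[/eqP cp /eqP dp Ip] /and3P[ap /eqP q1 /forallP q2].
have cq : #|q.1| = i.-1 by rewrite -cp q1 (cardsD1 a p.1) ap.
have dq : (\sum_k (q.2 k : nat) = (\sum_k (p.2 k : nat)).+1)%N.
  have one : (\sum_k (k == a) = 1)%N.
    by rewrite (bigD1 a) //= eqxx big1 // => k /negbTE->.
  by rewrite (eq_bigr _ (fun k _ => eqP (q2 k))) big_split /= one addn1.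
have i_gt0 : (0 < i)%N by rewrite -cp (cardsD1 a) ap.
apply/and3P; split; [by rewrite cq | by rewrite dq; apply/eqP; lia |].
by apply: up Ip => k; rewrite (eqP (q2 k)) leq_addr.
Qed.

Lemma kbasis_kcoef i p q : kbasis I i p -> kcoef K p q != 0 -> kbasis I i.-1 q.
Proof.
move=> Ip; apply: contraNT => nIq; apply/eqP/kcoef_eq0 => a.
by apply: contra nIq; apply: kbasis_kstep.
Qed.

Lemma kdiff_mulmx_eq0 i : kdiff K I j i.+1 *m kdiff K I j i = 0.
Proof.
apply/matrixP => r c; rewrite !mxE; under eq_bigr do rewrite !kdiffE /=.
set p := enum_val r; set q := enum_val c.
rewrite (reindex enum_rank) /=; last exact/onW_bij/enum_rank_bij.
under eq_bigr do rewrite enum_rankK.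
have drop_mid x : (kbasis I i.+1 p && kbasis I i x)%:R * kcoef K p x *
    ((kbasis I i x && kbasis I i.-1 q)%:R * kcoef K x q) =
    (kbasis I i.+1 p && kbasis I i.-1 q)%:R * (kcoef K p x * kcoef K x q).
  have [Ix | nIx] := boolP (kbasis I i x).
    case: (kbasis I i.+1 p); case: (kbasis I i.-1 q);
    by rewrite /= ?mulr1n ?mulr0n ?mul1r ?mul0r ?mulr0.
  case: (boolP (kbasis I i.+1 p)) => [Ip | _]; last by rewrite /= mulr0n !mul0r.
  rewrite (_ : kcoef K p x = 0); first by rewrite !(mulr0, mul0r).
  by apply/eqP; apply: contraNT nIx; apply: (@kbasis_kcoef i.+1 p x Ip).
under eq_bigr do rewrite drop_mid.
by rewrite -mulr_sumr sum_kcoef_mul mulr0.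
Qed.

End KoszulDifferential.

Lemma kbasis_deg_part n (I : monpred n) j i (p : kbasis_t n j) :
  upclosed I -> kbasis (deg_part I (j - i)) i p = kbasis I i p.
Proof.
move=> up; rewrite /kbasis; case: (#|p.1| == i) => //=.
case: eqP => //= deg; rewrite deg_part_homog //.
by move: deg; move: (\sum_k _)%N => s; lia.
Qed.

Lemma kdiff_deg_part (K : fieldType) n (I : monpred n) j i :
  upclosed I -> kdiff K I j i = kdiff K (deg_part I (j - i)) j i.
Proof.
move=> up; apply/matrixP => r c; rewrite !kdiffE kbasis_deg_part //.
have [-> | nz] := eqVneq (kcoef K (enum_val r) (enum_val c)) 0; first by rewrite !mulr0.
case: (boolP (kbasis I i _)) => //= Ip.
rewrite (kbasis_kcoef up Ip nz) (kbasis_kcoef (@deg_part_upclosed _ I (j - i)) _ nz) //.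
by rewrite kbasis_deg_part.
Qed.

Lemma card_enum_val_preim (T : finType) (P : pred T) :
  #|[pred r : 'I_#|T| | P (enum_val r)]| = #|[set x | P x]|.
Proof.
rewrite (@eq_card _ _ (enum_val @^-1: [set x | P x])) => [|r]; last by rewrite !inE.
by rewrite -(can2_imset_pre _ enum_rankK enum_valK) card_imset //; apply: enum_rank_inj.
Qed.

Lemma rank_kdiff_le (K : fieldType) n (I : monpred n) j i : upclosed I ->
  (\rank (kdiff K I j i.+1) + \rank (kdiff K I j i)
     <= #|[set p | @kbasis n I j i p]|)%N.
Proof.
move=> up; rewrite -card_enum_val_preim; apply: mxrank_mul_support.
- by move=> r c; rewrite inE => /negbTE nIc; rewrite kdiffE /= nIc andbF mul0r.
- by move=> r c; rewrite inE => /negbTE nIr; rewrite kdiffE nIr mul0r.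
- exact: kdiff_mulmx_eq0.
Qed.

(* The rank of the m-th map of a complex that is exact below m, with chain spaces
   of dimensions [c k]; exactness makes every truncated subtraction exact. *)
Fixpoint exact_rank (c : nat -> nat) (m : nat) : nat :=
  if m is k.+1 then c k - exact_rank c k else 0.

Lemma rank_kdiff_exact (K : fieldType) n (I : monpred n) j m : upclosed I ->
  (forall k, (k < m)%N -> betti K I k j = 0) ->
  \rank (kdiff K I j m) = exact_rank (fun k => #|[set p | @kbasis n I j k p]|) m.
Proof.
move=> up; elim: m => [|m IHm] exact_lt; first by rewrite kdiff0 mxrank0.
have := exact_lt m (ltnSn m); rewrite /betti /= -IHm => [|k lt_km]; last first.
  by apply: exact_lt; apply: ltnW.
have := rank_kdiff_le K j m up.
set C := #|_|; set r1 := \rank (kdiff K I j m.+1); set r0 := \rank (kdiff K I j m).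
by clearbody C r1 r0; lia.
Qed.

Lemma rank_kdiff_linear (K : fieldType) n (I : monpred n) j i :
  upclosed I -> (i <= j)%N -> t_linear K (deg_part I (j - i)) (j - i) ->
  \rank (kdiff K I j i) =
    exact_rank (fun k => #|[set p | @kbasis n (deg_part I (j - i)) j k p]|) i.
Proof.
move=> up le_ij [_ lin]; rewrite kdiff_deg_part //.
apply: rank_kdiff_exact => [|k lt_ki]; first exact: deg_part_upclosed.
by apply: lin; apply/eqP; lia.
Qed.

Lemma rank_kdiff_char_free n (I : monpred n) (K1 K2 : fieldType) j i : upclosed I ->
  (forall K : fieldType, componentwise_linear K I) ->
  \rank (kdiff K1 I j i) = \rank (kdiff K2 I j i).
Proof.
move=> up cwl; have [lt_ji | le_ij] := ltnP j i; first by rewrite !kdiff_gt ?mxrank0.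
by rewrite !rank_kdiff_linear //; apply: cwl.
Qed.

Theorem theorem5p1 (n : nat) (G : seq {ffun 'I_n -> nat}) :
  (forall K : fieldType, componentwise_linear K (monideal G)) ->
  forall (K1 K2 : fieldType) (i j : nat),
    betti K1 (monideal G) i j = betti K2 (monideal G) i j.
Proof.
move=> cwl K1 K2 i j; have up := @monideal_upclosed n G.
by rewrite /betti !(rank_kdiff_char_free K1 K2 j _ up cwl).
Qed.
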